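(* Let $\mathcal{Q}\subseteq\mathbb{R}^n$ and consider the fully actuated robotic system $\mathbf{D}(\mathbf{q})\ddot{\mathbf{q}}+\mathbf{C}(\mathbf{q},\dot{\mathbf{q}})\dot{\mathbf{q}}+\mathbf{G}(\mathbf{q})=\mathbf{B}\mathbf{u}$ with $\mathbf{u}\in\mathbb{R}^m$, $m=n$ and $\mathbf{B}$ invertible. Let $h_0:\mathcal{Q}\to\mathbb{R}$ be continuously differentiable and suppose there exist a continuously differentiable $\mathbf{k}_0:\mathcal{Q}\to\mathbb{R}^n$ and an extended class $\mathcal{K}_\infty$ function $\alpha$ with $\nabla h_0(\mathbf{q})\cdot\mathbf{k}_0(\mathbf{q})>-\alpha(h_0(\mathbf{q}))$ for all $\mathbf{q}\in\mathcal{Q}$. For $\mu>0$ let $$h(\mathbf{q},\dot{\mathbf{q}})=h_0(\mathbf{q})-\frac{1}{2\mu}(\dot{\mathbf{q}}-\mathbf{k}_0(\mathbf{q}))^\top\mathbf{D}(\mathbf{q})(\dot{\mathbf{q}}-\mathbf{k}_0(\mathbf{q})),\qquad \mathcal{C}=\{(\mathbf{q},\dot{\mathbf{q}})\in T\mathcal{Q}:h(\mathbf{q},\dot{\mathbf{q}})\ge0\}.$$ Then $h$ is an energy-based control barrier function for the robotic system on $\mathcal{C}$.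
   Context: $\mathbf{D}(\mathbf{q})$ is the positive definite inertia matrix, $\mathbf{C}$ the Coriolis matrix, $\mathbf{G}$ the gravity term, $\mathbf{B}$ the actuation matrix. An extended class $\mathcal{K}_\infty$ function is a continuous, strictly increasing $\alpha:\mathbb{R}\to\mathbb{R}$ with $\alpha(0)=0$ and $\alpha(s)\to\pm\infty$ as $s\to\pm\infty$. Energy-based CBF: the function $h$ above (with $\mathbf{k}_0$ continuously differentiable) defining $\mathcal{C}$ is an energy-based control barrier function for the robotic system on $\mathcal{C}$ if there exists an extended class $\mathcal{K}_\infty$ function $\alpha$ such that for all $(\mathbf{q},\dot{\mathbf{q}})\in T\mathcal{Q}$, $$\sup_{\mathbf{u}\in\mathbb{R}^m}\Big\{\tfrac{1}{\mu}(\dot{\mathbf{q}}-\mathbf{k}_0(\mathbf{q}))^\top\Big[\mathbf{D}(\mathbf{q})\tfrac{\partial\mathbf{k}_0}{\partial\mathbf{q}}(\mathbf{q})\dot{\mathbf{q}}+\mathbf{C}(\mathbf{q},\dot{\mathbf{q}})\mathbf{k}_0(\mathbf{q})+\mathbf{G}(\mathbf{q})-\mathbf{B}\mathbf{u}\Big]+\nabla h_0(\mathbf{q})\cdot\dot{\mathbf{q}}\Big\}>-\alpha(h(\mathbf{q},\dot{\mathbf{q}})).$$ *)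

From HB Require Import structures.
From mathcomp Require Import all_boot all_order all_algebra.
From mathcomp Require Import all_classical all_reals all_analysis.
Set Implicit Arguments. Unset Strict Implicit. Unset Printing Implicit Defensive.
Import Order.TTheory GRing.Theory Num.Theory.
Import numFieldNormedType.Exports.
Local Open Scope classical_set_scope.
Local Open Scope ring_scope.

Section Defs.
Variable R : realType.

Definition ext_classKinf (alpha : R -> R) : Prop :=
  [/\ continuous alpha,
      {homo alpha : x y / x < y},
      alpha 0 = 0,
      alpha x @[x --> +oo] --> +oo &
      alpha x @[x --> -oo] --> -oo].

Definition C1_on {V W : normedModType R} (Q : set V) (f : V -> W) : Prop :=
  (forall q, Q q -> differentiable f q) /\
  (forall v : V, {within Q, continuous (fun q => 'D_v f q)}).

Definition posdef {n : nat} (M : 'M[R]_n) : Prop :=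
  M^T = M /\ forall x : 'cV[R]_n, x != 0 -> 0 < (x^T *m M *m x) 0 0.

Variables (n m : nat).

Definition energy_h (D : 'cV[R]_n -> 'M[R]_n) (h0 : 'cV[R]_n -> R)
  (k0 : 'cV[R]_n -> 'cV[R]_n) (mu : R) (q qd : 'cV[R]_n) : R :=
  h0 q - (2 * mu)^-1 * ((qd - k0 q)^T *m D q *m (qd - k0 q)) 0 0.

(* safe set C = {(q,qd) in TQ | h(q,qd) >= 0}, with TQ = Q x R^n *)
Definition energy_safe_set (Q : set 'cV[R]_n) (D : 'cV[R]_n -> 'M[R]_n)
  (h0 : 'cV[R]_n -> R) (k0 : 'cV[R]_n -> 'cV[R]_n) (mu : R)
  : set ('cV[R]_n * 'cV[R]_n) :=
  [set x | Q x.1 /\ 0 <= energy_h D h0 k0 mu x.1 x.2].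

Definition ecbf_expr (D : 'cV[R]_n -> 'M[R]_n)
  (C : 'cV[R]_n -> 'cV[R]_n -> 'M[R]_n) (G : 'cV[R]_n -> 'cV[R]_n)
  (B : 'M[R]_(n, m)) (h0 : 'cV[R]_n -> R) (k0 : 'cV[R]_n -> 'cV[R]_n)
  (mu : R) (q qd : 'cV[R]_n) (u : 'cV[R]_m) : R :=
  mu^-1 * ((qd - k0 q)^T *m
      (D q *m ('D_qd k0 q) + C q qd *m k0 q + G q - B *m u)) 0 0
  + 'D_qd h0 q.

(* energy-based control barrier function for the robotic system
   D(q) qdd + C(q,qd) qd + G(q) = B u on the set C defined by h *)
Definition energy_CBF (Q : set 'cV[R]_n) (D : 'cV[R]_n -> 'M[R]_n)
  (C : 'cV[R]_n -> 'cV[R]_n -> 'M[R]_n) (G : 'cV[R]_n -> 'cV[R]_n)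
  (B : 'M[R]_(n, m)) (h0 : 'cV[R]_n -> R) (k0 : 'cV[R]_n -> 'cV[R]_n)
  (mu : R) : Prop :=
  C1_on Q k0 /\
  exists alpha : R -> R, ext_classKinf alpha /\
    forall q qd : 'cV[R]_n, Q q ->
      ((- alpha (energy_h D h0 k0 mu q qd))%:E <
        ereal_sup [set (ecbf_expr D C G B h0 k0 mu q qd u)%:E | u in [set: 'cV[R]_m]])%E.

End Defs.

(* Full actuation makes the condition easy: the input enters the expression
   under the supremum only through the term -(1/mu) e^T B u with
   e = qd - k0 q, so when e <> 0 an invertible B lets u realise every real
   value and the supremum is +oo.  When e = 0 the expression no longer depends
   on u, h reduces to h0 and the condition is exactly the hypothesis
   grad h0 . k0 > -alpha(h0). *)
From HB Require Import structures.
From mathcomp Require Import all_boot all_order all_algebra.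
From mathcomp Require Import all_classical all_reals all_analysis.
Set Implicit Arguments. Unset Strict Implicit. Unset Printing Implicit Defensive.
Import Order.TTheory GRing.Theory Num.Theory.
Import numFieldNormedType.Exports.
Local Open Scope classical_set_scope.
Local Open Scope ring_scope.

Lemma trmx_mul_self_gt0 (R : realDomainType) n (e : 'cV[R]_n) :
  e != 0 -> 0 < (e^T *m e) 0 0.
Proof.
move=> e_neq0; rewrite mxE lt_def.
have sqr_ge0_i (i : 'I_n) : true -> 0 <= e^T 0 i * e i 0.
  by rewrite mxE -expr2 sqr_ge0.
rewrite sumr_ge0 // andbT; apply: contra e_neq0 => /eqP /psumr_eq0P sum0.
apply/eqP/matrixP => i j; rewrite (ord1 j) mxE.
by have /eqP := sum0 sqr_ge0_i i isT; rewrite mxE mulf_eq0 orbb => /eqP.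
Qed.

Lemma dot_sub_mulmx_onto (R : realFieldType) n (B : 'M[R]_n)
    (w e : 'cV[R]_n) (t : R) :
  B \in unitmx -> e != 0 -> exists u, (e^T *m (w - B *m u)) 0 0 = t.
Proof.
move=> B_unit e_neq0; have ee_gt0 := trmx_mul_self_gt0 e_neq0.
exists (invmx B *m (w - (t / (e^T *m e) 0 0) *: e)).
by rewrite mulKVmx // opprB addrC subrK -scalemxAr mxE divfK ?gt_eqF.
Qed.

Section EnergyCBFExpression.
Variables (R : realType) (n : nat).
Variables (D : 'cV[R]_n -> 'M[R]_n) (C : 'cV[R]_n -> 'cV[R]_n -> 'M[R]_n).
Variables (G : 'cV[R]_n -> 'cV[R]_n) (B : 'M[R]_n).
Variables (h0 : 'cV[R]_n -> R) (k0 : 'cV[R]_n -> 'cV[R]_n) (mu : R).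

Lemma energy_h_at_k0 q : energy_h D h0 k0 mu q (k0 q) = h0 q.
Proof. by rewrite /energy_h subrr trmx0 !mul0mx mxE mulr0 subr0. Qed.

Lemma ecbf_expr_at_k0 q u :
  ecbf_expr D C G B h0 k0 mu q (k0 q) u = 'D_(k0 q) h0 q.
Proof. by rewrite /ecbf_expr subrr trmx0 mul0mx mxE mulr0 add0r. Qed.

Lemma ecbf_expr_onto q qd r :
  B \in unitmx -> mu != 0 -> qd != k0 q ->
  exists u, ecbf_expr D C G B h0 k0 mu q qd u = r.
Proof.
move=> B_unit mu_neq0 qd_neq_k0.
have [|u eq_t] := dot_sub_mulmx_onto
  (D q *m 'D_qd k0 q + C q qd *m k0 q + G q) (mu * (r - 'D_qd h0 q))
  B_unit (_ : qd - k0 q != 0).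
  by rewrite subr_eq0.
by exists u; rewrite /ecbf_expr eq_t mulKf // subrK.
Qed.

End EnergyCBFExpression.

Theorem lemma5 (R : realType) (n : nat) (Q : set 'cV[R]_n)
  (D : 'cV[R]_n -> 'M[R]_n) (C : 'cV[R]_n -> 'cV[R]_n -> 'M[R]_n)
  (G : 'cV[R]_n -> 'cV[R]_n) (B : 'M[R]_n)
  (h0 : 'cV[R]_n -> R) (k0 : 'cV[R]_n -> 'cV[R]_n) (alpha : R -> R) (mu : R) :
  (forall q, Q q -> posdef (D q)) ->
  B \in unitmx ->
  C1_on Q h0 ->
  C1_on Q k0 ->
  ext_classKinf alpha ->
  (forall q, Q q -> - alpha (h0 q) < 'D_(k0 q) h0 q) ->
  0 < mu ->
  energy_CBF Q D C G B h0 k0 mu.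
Proof.
move=> _ B_unit _ k0_C1 alpha_Kinf h0_k0 mu_gt0.
split => //; exists alpha; split => // q qd Qq; apply/ereal_sup_gtP.
have [->|qd_neq_k0] := eqVneq qd (k0 q).
  exists ('D_(k0 q) h0 q)%:E; first by exists 0; rewrite ?ecbf_expr_at_k0.
  by rewrite energy_h_at_k0 lte_fin h0_k0.
set r := - alpha (energy_h D h0 k0 mu q qd) + 1.
have [u expr_r] := ecbf_expr_onto D C G h0 r B_unit (lt0r_neq0 mu_gt0) qd_neq_k0.
exists r%:E; first by exists u; rewrite ?expr_r.
by rewrite lte_fin ltrDl.
Qed.
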